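(* Let $(X,d,\mu)$ be as in the context (no doubling assumed) and $x\in X$. Then $\underline{Q}_0(x)\subset\underline{S}_0(x)$ and $\overline{Q}_0(x)\subset\overline{S}_0(x)$. Moreover, $\underline{S}_0(x)\cap\overline{S}_0(x)$ contains at most one point, and when it is nonempty, $\underline{Q}_0(x)=\underline{S}_0(x)$ and $\overline{Q}_0(x)=\overline{S}_0(x)$.
   Context: $(X,d,\mu)$ is a metric space with a positive complete Borel measure $\mu$ such that $0<\mu(B)<\infty$ for every ball $B$; $B_r=B(x,r)$. $\underline{Q}_0(x)=\{q>0:\exists C_q,\ \mu(B_r)/\mu(B_R)\le C_q(r/R)^q\text{ for }0<r<R\le1\}$; $\underline{S}_0(x)=\{q>0:\exists C_q,\ \mu(B_r)\le C_qr^q\text{ for }0<r\le1\}$; $\overline{S}_0(x)=\{q>0:\exists C_q,\ \mu(B_r)\ge C_qr^q\text{ for }0<r\le1\}$; $\overline{Q}_0(x)=\{q>0:\exists C_q,\ \mu(B_r)/\mu(B_R)\ge C_q(r/R)^q\text{ for }0<r<R\le1\}$. *)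

From Stdlib Require Import Reals.
Open Scope R_scope.

Record is_metric (X : Type) (d : X -> X -> R) : Prop := {
  dist_nonneg : forall x y, 0 <= d x y;
  dist_eq0 : forall x y, d x y = 0 <-> x = y;
  dist_sym : forall x y, d x y = d y x;
  dist_tri : forall x y z, d x z <= d x y + d y z }.

Definition ball {X : Type} (d : X -> X -> R) (x : X) (r : R) : X -> Prop :=
  fun y => d x y < r.

Definition is_open {X : Type} (d : X -> X -> R) (U : X -> Prop) : Prop :=
  forall x, U x -> exists r, 0 < r /\ forall y, ball d x r y -> U y.

Inductive ER := Fin (a : R) | Inf.

(** sum of a series of extended reals (terms assumed nonnegative) *)
Definition er_series (f : nat -> ER) (s : ER) : Prop :=
  match s with
  | Fin l => exists g : nat -> R, (forall n, f n = Fin (g n)) /\ infinite_sum g l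
  | Inf => (exists n, f n = Inf) \/
           (exists g : nat -> R, (forall n, f n = Fin (g n)) /\
              forall M, exists N, forall n, (n >= N)%nat -> M < sum_f_R0 g n)
  end.

Record is_complete_borel_measure {X : Type} (d : X -> X -> R)
    (meas : (X -> Prop) -> Prop) (mu : (X -> Prop) -> ER) : Prop := {
  meas_empty : meas (fun _ => False);
  meas_compl : forall A, meas A -> meas (fun x => ~ A x);
  meas_union : forall A : nat -> X -> Prop, (forall n, meas (A n)) ->
                 meas (fun x => exists n, A n x);
  meas_open : forall U, is_open d U -> meas U;
  mu_nonneg : forall A, meas A -> match mu A with Fin a => 0 <= a | Inf => True end;
  mu_empty : mu (fun _ => False) = Fin 0;
  mu_sigma_add : forall A : nat -> X -> Prop, (forall n, meas (A n)) ->
      (forall m n x, m <> n -> A m x -> A n x -> False) ->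
      er_series (fun n => mu (A n)) (mu (fun x => exists n, A n x));
  mu_complete : forall A N, meas N -> mu N = Fin 0 ->
      (forall x, A x -> N x) -> meas A }.

Definition balls_pos_finite {X : Type} (d : X -> X -> R)
    (mu : (X -> Prop) -> ER) : Prop :=
  forall x r, 0 < r -> exists a, mu (ball d x r) = Fin a /\ 0 < a.

(** real value of mu(B(x,r)) (meaningful under balls_pos_finite) *)
Definition muB {X : Type} (d : X -> X -> R) (mu : (X -> Prop) -> ER)
    (x : X) (r : R) : R :=
  match mu (ball d x r) with Fin a => a | Inf => 0 end.

Definition Qlow0 {X : Type} d mu (x : X) (q : R) : Prop :=
  0 < q /\ exists C, 0 < C /\ forall r R', 0 < r -> r < R' -> R' <= 1 ->
    muB d mu x r / muB d mu x R' <= C * Rpower (r / R') q.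

Definition Slow0 {X : Type} d mu (x : X) (q : R) : Prop :=
  0 < q /\ exists C, 0 < C /\ forall r, 0 < r -> r <= 1 ->
    muB d mu x r <= C * Rpower r q.

Definition Sup0 {X : Type} d mu (x : X) (q : R) : Prop :=
  0 < q /\ exists C, 0 < C /\ forall r, 0 < r -> r <= 1 ->
    muB d mu x r >= C * Rpower r q.

Definition Qup0 {X : Type} d mu (x : X) (q : R) : Prop :=
  0 < q /\ exists C, 0 < C /\ forall r R', 0 < r -> r < R' -> R' <= 1 ->
    muB d mu x r / muB d mu x R' >= C * Rpower (r / R') q.

From Stdlib Require Import Reals Lra.
Open Scope R_scope.

(* Everything depends on the measure only through the ball-mass function
   m(r) = mu(B(x,r)), and only through its positivity on (0,1]; so the four
   exponent sets are defined for an arbitrary function m : R -> R, and the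
   sets Qlow0, Slow0, Sup0, Qup0 of the statement are these sets for
   m = muB d mu x (definitionally).

   - Taking R = 1 in a ratio bound gives a size bound (Q0 ⊂ S0, both sides).
   - If c r^p <= m(r) <= C r^q on (0,1], then q <= p: otherwise r^(q-p) -> 0
     as r -> 0 contradicts c <= C r^(q-p).  Hence S_low ∩ S_up is at most
     one point q0, lying above S_low and below S_up.
   - Dividing the two size bounds at exponent q0 gives the ratio bounds
     m(r)/m(R) <= C (r/R)^q0 and >= c (r/R)^q0; since r/R < 1, these persist
     for every exponent q <= q0, resp. q >= q0, which gives S0 ⊂ Q0. *)

Lemma Rpower_pos (s q : R) : 0 < Rpower s q.
Proof. unfold Rpower; apply exp_pos. Qed.

Lemma Rpower_base_1 (q : R) : Rpower 1 q = 1.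
Proof. unfold Rpower; rewrite ln_1, Rmult_0_r; apply exp_0. Qed.

Lemma Rpower_div_base (r R q : R) :
  0 < r -> 0 < R -> Rpower (r / R) q = Rpower r q / Rpower R q.
Proof.
  intros hr hR.
  assert (hrR : 0 < r / R) by (apply Rdiv_lt_0_compat; lra).
  assert (Hprod : Rpower r q = Rpower (r / R) q * Rpower R q).
  { rewrite Rpower_mult_distr by lra. f_equal. field. lra. }
  rewrite Hprod. assert (hp := Rpower_pos R q). field. lra.
Qed.

Lemma Rpower_le_1 (s e : R) : 0 < s -> s <= 1 -> 0 <= e -> Rpower s e <= 1.
Proof.
  intros hs hs1 he. rewrite <- (Rpower_base_1 e). apply Rle_Rpower_l; lra.
Qed.

Lemma Rpower_antitone_exponent (s q q' : R) :
  0 < s -> s <= 1 -> q <= q' -> Rpower s q' <= Rpower s q.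
Proof.
  intros hs hs1 hqq'.
  replace q' with (q + (q' - q)) by ring. rewrite Rpower_plus.
  assert (hp := Rpower_pos s q).
  assert (hle := Rpower_le_1 s (q' - q) hs hs1 ltac:(lra)). nra.
Qed.

Lemma radius_ratio_bounds (r R : R) : 0 < r -> r < R -> 0 < r / R < 1.
Proof.
  intros hr hrR. split; [apply Rdiv_lt_0_compat; lra |].
  apply (Rmult_lt_reg_r R); [lra |].
  unfold Rdiv. rewrite Rmult_assoc, Rinv_l; lra.
Qed.

(* If c r^a <= C r^b for all r in (0,1], then b <= a: for b > a the factor
   r^(b-a) takes any value t in (0,1], in particular one with C t < c. *)
Lemma power_bound_exponents (a b c C : R) :
  0 < c -> 0 < C ->
  (forall r, 0 < r -> r <= 1 -> c * Rpower r a <= C * Rpower r b) -> b <= a.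
Proof.
  intros hc hC Hbound. destruct (Rle_or_lt b a) as [hba | hab]; [exact hba | exfalso].
  set (t := Rmin 1 (c / (2 * C))).
  assert (ht0 : 0 < t) by (apply Rmin_pos; [lra | apply Rdiv_lt_0_compat; lra]).
  assert (ht1 : t <= 1) by apply Rmin_l.
  assert (hCt : C * t <= c / 2).
  { replace (c / 2) with (C * (c / (2 * C))) by (field; lra).
    apply Rmult_le_compat_l; [lra | apply Rmin_r]. }
  set (r := Rpower t (/ (b - a))).
  assert (hr0 : 0 < r) by apply Rpower_pos.
  assert (hr1 : r <= 1).
  { apply Rpower_le_1; [lra | lra | left; apply Rinv_0_lt_compat; lra]. }
  assert (Hgap : Rpower r (b - a) = t).
  { unfold r. rewrite Rpower_mult, Rinv_l by lra. apply Rpower_1; lra. }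
  assert (Hb : Rpower r b = Rpower r a * t).
  { rewrite <- Hgap, <- Rpower_plus. f_equal. ring. }
  specialize (Hbound r hr0 hr1). rewrite Hb in Hbound.
  assert (hpa := Rpower_pos r a). nra.
Qed.

Section ExponentSets.

(* [m r] stands for the mass mu(B(x,r)) of the ball of radius r at x. *)
Variable m : R -> R.

Definition lower_ratio_exponent (q : R) : Prop :=
  0 < q /\ exists C, 0 < C /\ forall r R', 0 < r -> r < R' -> R' <= 1 ->
    m r / m R' <= C * Rpower (r / R') q.

Definition lower_size_exponent (q : R) : Prop :=
  0 < q /\ exists C, 0 < C /\ forall r, 0 < r -> r <= 1 -> m r <= C * Rpower r q.

Definition upper_size_exponent (q : R) : Prop :=
  0 < q /\ exists C, 0 < C /\ forall r, 0 < r -> r <= 1 -> m r >= C * Rpower r q.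

Definition upper_ratio_exponent (q : R) : Prop :=
  0 < q /\ exists C, 0 < C /\ forall r R', 0 < r -> r < R' -> R' <= 1 ->
    m r / m R' >= C * Rpower (r / R') q.

Lemma size_exponents_ordered (p q : R) :
  upper_size_exponent p -> lower_size_exponent q -> q <= p.
Proof.
  intros [_ [c [hc Hc]]] [_ [C [hC HC]]].
  apply (power_bound_exponents p q c C hc hC).
  intros r hr hr1. specialize (Hc r hr hr1). specialize (HC r hr hr1). lra.
Qed.

Lemma two_sided_size_exponent_unique (p q : R) :
  lower_size_exponent p -> upper_size_exponent p ->
  lower_size_exponent q -> upper_size_exponent q -> p = q.
Proof.
  intros HSp HUp HSq HUq.
  apply Rle_antisym; apply size_exponents_ordered; assumption.
Qed.

Hypothesis m_pos : forall r, 0 < r -> r <= 1 -> 0 < m r.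

(* Ratio bounds with R = 1 are size bounds, with constant rescaled by m 1. *)
Lemma lower_ratio_size (q : R) : lower_ratio_exponent q -> lower_size_exponent q.
Proof.
  intros [hq [C [hC Hratio]]]. split; [exact hq |].
  assert (hm1 : 0 < m 1) by (apply m_pos; lra).
  exists ((C + 1) * m 1). split; [nra |].
  intros r hr hr1. assert (hp := Rpower_pos r q).
  destruct (Rle_lt_or_eq_dec r 1 hr1) as [hlt | ->].
  - specialize (Hratio r 1 hr hlt (Rle_refl 1)).
    rewrite Rdiv_1_r in Hratio.
    apply Rmult_le_compat_r with (r := m 1) in Hratio; [| lra].
    replace (m r / m 1 * m 1) with (m r) in Hratio by (field; lra). nra.
  - rewrite Rpower_base_1. nra.
Qed.

Lemma upper_ratio_size (q : R) : upper_ratio_exponent q -> upper_size_exponent q.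
Proof.
  intros [hq [C [hC Hratio]]]. split; [exact hq |].
  assert (hm1 : 0 < m 1) by (apply m_pos; lra).
  assert (hmin1 := Rmin_l C 1). assert (hmin2 := Rmin_r C 1).
  exists (Rmin C 1 * m 1). split; [apply Rmult_lt_0_compat; [apply Rmin_pos |]; lra |].
  intros r hr hr1. assert (hp := Rpower_pos r q).
  destruct (Rle_lt_or_eq_dec r 1 hr1) as [hlt | ->].
  - specialize (Hratio r 1 hr hlt (Rle_refl 1)).
    rewrite Rdiv_1_r in Hratio. apply Rge_le in Hratio.
    apply Rmult_le_compat_r with (r := m 1) in Hratio; [| lra].
    replace (m r / m 1 * m 1) with (m r) in Hratio by (field; lra).
    assert (Rmin C 1 * m 1 <= C * m 1) by (apply Rmult_le_compat_r; lra).
    nra.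
  - rewrite Rpower_base_1. nra.
Qed.

Lemma ratio_between_size_bounds (q0 c C r R' : R) :
  0 < c -> 0 < C -> 0 < r -> r < R' -> R' <= 1 ->
  (forall s, 0 < s -> s <= 1 -> c * Rpower s q0 <= m s <= C * Rpower s q0) ->
  c / C * Rpower (r / R') q0 <= m r / m R' <= C / c * Rpower (r / R') q0.
Proof.
  intros hc hC hr hrR hR1 Hsize.
  destruct (Hsize r ltac:(lra) ltac:(lra)) as [hr_lo hr_hi].
  destruct (Hsize R' ltac:(lra) hR1) as [hR_lo hR_hi].
  assert (hpr := Rpower_pos r q0). assert (hpR := Rpower_pos R' q0).
  assert (hmR : 0 < m R') by (apply m_pos; lra).
  rewrite Rpower_div_base by lra.
  split.
  - replace (c / C * (Rpower r q0 / Rpower R' q0))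
      with ((c * Rpower r q0) / (C * Rpower R' q0)) by (field; lra).
    unfold Rdiv. apply Rmult_le_compat; [nra | | lra |].
    + left; apply Rinv_0_lt_compat; nra.
    + apply Rinv_le_contravar; lra.
  - replace (C / c * (Rpower r q0 / Rpower R' q0))
      with ((C * Rpower r q0) / (c * Rpower R' q0)) by (field; lra).
    unfold Rdiv. apply Rmult_le_compat; [nra | | lra |].
    + left; apply Rinv_0_lt_compat; lra.
    + apply Rinv_le_contravar; nra.
Qed.

Section TwoSided.

Variable q0 : R.
Hypothesis q0_lower : lower_size_exponent q0.
Hypothesis q0_upper : upper_size_exponent q0.

Lemma two_sided_size_bound :
  exists c C, 0 < c /\ 0 < C /\
    forall s, 0 < s -> s <= 1 -> c * Rpower s q0 <= m s <= C * Rpower s q0.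
Proof.
  destruct q0_lower as [_ [C [hC HC]]]. destruct q0_upper as [_ [c [hc Hc]]].
  exists c, C. split; [exact hc | split; [exact hC |]].
  intros s hs hs1. specialize (HC s hs hs1). specialize (Hc s hs hs1). lra.
Qed.

(* Every lower size exponent q satisfies q <= q0, and the upper ratio bound
   at q0 transfers to q because r/R' < 1. *)
Lemma lower_size_ratio (q : R) : lower_size_exponent q -> lower_ratio_exponent q.
Proof.
  intros Hq. assert (hqq0 := size_exponents_ordered q0 q q0_upper Hq).
  destruct Hq as [hq _]. split; [exact hq |].
  destruct two_sided_size_bound as [c [C [hc [hC Hsize]]]].
  exists (C / c). split; [apply Rdiv_lt_0_compat; lra |].
  intros r R' hr hrR hR1.
  assert (hs := radius_ratio_bounds r R' hr hrR).
  destruct (ratio_between_size_bounds q0 c C r R' hc hC hr hrR hR1 Hsize) as [_ Hhi].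
  eapply Rle_trans; [exact Hhi |].
  apply Rmult_le_compat_l; [left; apply Rdiv_lt_0_compat; lra |].
  apply Rpower_antitone_exponent; lra.
Qed.

Lemma upper_size_ratio (q : R) : upper_size_exponent q -> upper_ratio_exponent q.
Proof.
  intros Hq. assert (hq0q := size_exponents_ordered q q0 Hq q0_lower).
  destruct Hq as [hq _]. split; [exact hq |].
  destruct two_sided_size_bound as [c [C [hc [hC Hsize]]]].
  exists (c / C). split; [apply Rdiv_lt_0_compat; lra |].
  intros r R' hr hrR hR1. apply Rle_ge.
  assert (hs := radius_ratio_bounds r R' hr hrR).
  destruct (ratio_between_size_bounds q0 c C r R' hc hC hr hrR hR1 Hsize) as [Hlo _].
  eapply Rle_trans; [| exact Hlo].
  apply Rmult_le_compat_l; [left; apply Rdiv_lt_0_compat; lra |].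
  apply Rpower_antitone_exponent; lra.
Qed.

End TwoSided.

End ExponentSets.

Lemma muB_pos (X : Type) (d : X -> X -> R) (mu : (X -> Prop) -> ER) (x : X) :
  balls_pos_finite d mu -> forall r, 0 < r -> 0 < muB d mu x r.
Proof.
  intros Hball r hr. unfold muB.
  destruct (Hball x r hr) as [a [-> ha]]. exact ha.
Qed.

Theorem lemma2p3 (X : Type) (d : X -> X -> R)
    (meas : (X -> Prop) -> Prop) (mu : (X -> Prop) -> ER)
    (Hd : is_metric X d) (Hmu : is_complete_borel_measure d meas mu)
    (Hball : balls_pos_finite d mu) (x : X) :
  (forall q, Qlow0 d mu x q -> Slow0 d mu x q) /\
  (forall q, Qup0 d mu x q -> Sup0 d mu x q) /\
  (forall p q, Slow0 d mu x p -> Sup0 d mu x p ->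
               Slow0 d mu x q -> Sup0 d mu x q -> p = q) /\
  ((exists q, Slow0 d mu x q /\ Sup0 d mu x q) ->
     (forall q, Qlow0 d mu x q <-> Slow0 d mu x q) /\
     (forall q, Qup0 d mu x q <-> Sup0 d mu x q)).
Proof.
  (* The four sets are the abstract exponent sets of m = muB d mu x. *)
  set (m := muB d mu x).
  assert (m_pos : forall r, 0 < r -> r <= 1 -> 0 < m r)
    by (intros r hr _; exact (muB_pos X d mu x Hball r hr)).
  split; [exact (lower_ratio_size m m_pos) |].
  split; [exact (upper_ratio_size m m_pos) |].
  split; [exact (two_sided_size_exponent_unique m) |].
  intros [q0 [Hlow Hup]]. split; intros q; split.
  - exact (lower_ratio_size m m_pos q).
  - exact (lower_size_ratio m m_pos q0 Hlow Hup q).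
  - exact (upper_ratio_size m m_pos q).
  - exact (upper_size_ratio m m_pos q0 Hlow Hup q).
Qed.
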